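(* Let $p_1,\ldots,p_m\in\mathbb Z_{>0}$ and $p=\operatorname{lcm}(p_1,\ldots,p_m)$. Let $\Omega_1,\ldots,\Omega_m$ be words in polynomial letters, $e_1,\ldots,e_m\in\mathbb Z_{\ge0}$, $z\in\mathbb C$, $t\in\mathbb Z_{\ge0}$, $P_1,\ldots,P_t\in\mathbb C[x]$ and $q_1,\ldots,q_t\in\mathbb C$ ($t=0$ allowed). Assume that all polynomial factors appearing are nonzero at the positive integers at which they are evaluated, after all scale changes (each polynomial $Q$ occurring in a letter of $\Omega_j$ satisfies $Q(m/(p/p_j))\ne0$ and each $P_\nu$ satisfies $P_\nu(m/p)\neq0$, for positive integers $m\le pk$), and fix compatible branches of the powers. Then for every positive integer $k$, \[ S(k)=\sum_{n=1}^{k}z^n\prod_{\nu=1}^{t}P_\nu(n)^{q_\nu}\prod_{j=1}^{m}\mathcal P_{\Omega_j}(p_jn)^{e_j}\in\operatorname{span}_{\mathbb C}\{\mathcal P_\Theta(pk)\}_\Theta, \] where $\Theta$ ranges over words in polynomial letters.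
   Context: A polynomial letter is a triple $L=(\boldsymbol\rho,\sigma,\mathbf P)$ with $\boldsymbol\rho=(\rho_1,\ldots,\rho_t)\in\mathbb C^t$, $\sigma\in\mathbb C$, $\mathbf P=(P_1,\ldots,P_t)$, $P_\nu\in\mathbb C[x]$; its value at a positive integer $n$ is $L(n)=\sigma^n\prod_{\nu=1}^tP_\nu(n)^{-\rho_\nu}$ (branches fixed). For a word $\Omega=(L_1,\ldots,L_d)$ of polynomial letters, $\mathcal P_\Omega(N)=\sum_{N\ge n_1>\cdots>n_d\ge1}\prod_{j=1}^dL_j(n_j)$ and $\mathcal P_\emptyset(N)=1$. *)

From HB Require Import structures.
From mathcomp Require Import all_boot all_order all_algebra.
From mathcomp Require Import reals sequences exp trigo.
From mathcomp Require Import complex.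
From Stdlib Require List.
Set Implicit Arguments. Unset Strict Implicit. Unset Printing Implicit Defensive.
Import Order.TTheory GRing.Theory Num.Theory.
Local Open Scope ring_scope.

Section PolyLetters.
Variable R : realType.
Local Notation C := (R[i]).

Definition expC (w : C) : C :=
  let: Complex a b := w in Complex (expR a * cos b) (expR a * sin b).

(* A fixed branch of the complex power:  w ^ a := exp (a * lg w), where
   lg is a fixed branch of the logarithm (hypothesis: expC (lg w) = w for w != 0). *)
Definition cpow (lg : C -> C) (w a : C) : C := expC (a * lg w).

(* A polynomial letter L = (rho, sigma, P): lsig = sigma, lfac = [(rho_1,P_1);...;(rho_t,P_t)] *)
Record letter := Letter { lsig : C; lfac : seq (C * {poly C}) }.

Definition letter_val (lg : C -> C) (L : letter) (n : nat) : C :=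
  lsig L ^+ n * \prod_(f <- lfac L) cpow lg (f.2).[n%:R] (- f.1).

Definition word := seq letter.

(* P_Omega(N) = sum_{N >= n_1 > ... > n_d >= 1} prod_j L_j(n_j),  P_[::](N) = 1,
   written recursively on the first letter. *)
Fixpoint Pword (lg : C -> C) (w : word) (N : nat) : C :=
  match w with
  | [::] => 1
  | L :: w' => \sum_(1 <= n < N.+1) letter_val lg L n * Pword lg w' n.-1
  end.

End PolyLetters.

(* The span of the sequences N |-> P_Theta(N) contains the constants and is
   closed under products, by the quasi-shuffle relation, and under
   N |-> sum_{n <= N} L(n) f(n) for every letter L.  It also contains
   N |-> P_Omega(N %/ d), because the filtered letter [d | n] L(n/d) is a
   combination of letters: [d | n] = d^-1 sum_{r < d} zeta^(r n) for a primitive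
   d-th root of unity zeta, sigma^(n/d) = w^n for w^d = sigma, and P(n/d) is the
   value at n of P(X/d).  Finally S(k) is a sum over n <= p k of [p | n] times a
   letter at n/p times a product of the P_(Omega_j)(n %/ (p/p_j)). *)
From HB Require Import structures.
From mathcomp Require Import all_boot all_order all_algebra.
From mathcomp Require Import reals sequences exp trigo.
From mathcomp Require Import complex.
From mathcomp Require Import cyclic separable cyclotomic.
From mathcomp Require Import ring.
From Stdlib Require List.
Import Order.TTheory GRing.Theory Num.Theory.
Set Implicit Arguments. Unset Strict Implicit. Unset Printing Implicit Defensive.
Local Open Scope ring_scope.

Lemma closed_field_prim_root (F : closedFieldType) n :
  n%:R != 0 :> F -> exists z : F, n.-primitive_root z.
Proof.
move=> nz_n; have n_gt0 : (0 < n)%N by case: n nz_n; rewrite ?eqxx.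
have [r Dp] := closed_field_poly_normal ('X^n - 1 : {poly F}).
rewrite (monicP _) ?monicXnsubC // scale1r in Dp.
have r_roots : all n.-unity_root r.
  by apply/allP=> z; rewrite -root_prod_XsubC -Dp.
have size_r : (n < (size r).+1)%N by rewrite -(size_prod_XsubC r id) -Dp size_XnsubC.
have [|z] := hasP (has_prim_root n_gt0 r_roots _ size_r); last by exists z.
by rewrite -separable_prod_XsubC -Dp separable_Xn_sub_1.
Qed.

Lemma sumr_prim_root_exp (F : idomainType) d (zeta : F) n :
  d.-primitive_root zeta ->
  \sum_(0 <= r < d) (zeta ^+ n) ^+ r = if (d %| n)%N then d%:R else 0.
Proof.
move=> zeta_prim; rewrite (prim_order_dvd zeta_prim n).
have [-> | ne1] := eqVneq (zeta ^+ n) 1.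
  by under eq_bigr do rewrite expr1n; rewrite sumr_const_nat subn0.
have : (zeta ^+ n - 1) * \sum_(0 <= r < d) (zeta ^+ n) ^+ r = 0.
  by rewrite big_mkord -subrX1 -exprM mulnC exprM (prim_expr_order zeta_prim) expr1n subrr.
by move/eqP; rewrite mulf_eq0 subr_eq0 (negPf ne1) => /eqP.
Qed.

Lemma sumr_nat_dvd (V : nmodType) d M (G : nat -> V) : (0 < d)%N ->
  \sum_(1 <= i < (M %/ d).+1) G i =
  \sum_(1 <= n < M.+1) (if (d %| n)%N then G (n %/ d)%N else 0).
Proof.
move=> d_gt0; elim: M => [|M IH]; first by rewrite div0n !big_geq.
rewrite (big_nat_recr M.+1) // -IH divnS //.
by case: (d %| M.+1)%N; rewrite /= ?add1n ?add0n ?addr0 // big_nat_recr.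
Qed.

Section WordSpan.
Variables (R : realType) (lg : R[i] -> R[i]).
Local Notation C := R[i].

Definition word_span (f : nat -> C) := exists cs : seq (C * word R),
  forall N, f N = \sum_(c <- cs) c.1 * Pword lg c.2 N.

Definition letter_span (f : nat -> C) := exists ls : seq (C * letter R),
  forall n, f n = \sum_(l <- ls) l.1 * letter_val lg l.2 n.

Lemma word_span_eq f g : word_span f -> f =1 g -> word_span g.
Proof. by move=> [cs Hf] fg; exists cs => N; rewrite -fg. Qed.

Lemma word_span_cst c : word_span (fun=> c).
Proof. by exists [:: (c, [::])] => N; rewrite big_seq1 mulr1. Qed.

Lemma word_span_Pword w : word_span (Pword lg w).
Proof. by exists [:: (1, w)] => N; rewrite big_seq1 mul1r. Qed.

Lemma word_spanD f g : word_span f -> word_span g -> word_span (fun N => f N + g N).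
Proof. by move=> [cf Hf] [cg Hg]; exists (cf ++ cg) => N; rewrite big_cat Hf Hg. Qed.

Lemma word_spanZ a f : word_span f -> word_span (fun N => a * f N).
Proof.
move=> [cs Hf]; exists [seq (a * c.1, c.2) | c <- cs] => N.
by rewrite big_map Hf mulr_sumr; apply: eq_bigr => c _; rewrite mulrA.
Qed.

Lemma word_span_sum (I : Type) (s : seq I) (F : I -> nat -> C) :
  (forall i, word_span (F i)) -> word_span (fun N => \sum_(i <- s) F i N).
Proof.
move=> FP; elim: s => [|i s IH].
  by apply: word_span_eq (word_span_cst 0) _ => N; rewrite big_nil.
by apply: word_span_eq (word_spanD (FP i) IH) _ => N; rewrite big_cons.
Qed.

Lemma letter_span_letter L : letter_span (letter_val lg L).
Proof. by exists [:: (1, L)] => n; rewrite big_seq1 mul1r. Qed.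

Definition letter_mul (a b : letter R) := Letter (lsig a * lsig b) (lfac a ++ lfac b).

Lemma letter_valM a b n :
  letter_val lg (letter_mul a b) n = letter_val lg a n * letter_val lg b n.
Proof. by rewrite /letter_val /= exprMn big_cat mulrACA. Qed.

Lemma letter_spanMr f b : letter_span f -> letter_span (fun n => f n * letter_val lg b n).
Proof.
move=> [ls Hf]; exists [seq (l.1, letter_mul l.2 b) | l <- ls] => n.
by rewrite big_map Hf mulr_suml; apply: eq_bigr => l _; rewrite letter_valM mulrA.
Qed.

Lemma Pword_cons0 L w : Pword lg (L :: w) 0 = 0.
Proof. by rewrite /= big_geq. Qed.

Lemma Pword_consS L w N :
  Pword lg (L :: w) N.+1 = Pword lg (L :: w) N + letter_val lg L N.+1 * Pword lg w N.
Proof. by rewrite [LHS]/= big_nat_recr. Qed.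

Lemma word_span_sum_letter_pred f g : letter_span f -> word_span g ->
  word_span (fun N => \sum_(1 <= n < N.+1) f n * g n.-1).
Proof.
move=> [ls Hf] [cs Hg].
exists [seq (l.1 * c.1, l.2 :: c.2) | l <- ls, c <- cs] => N.
rewrite big_allpairs_dep.
transitivity (\sum_(1 <= n < N.+1) \sum_(l <- ls) \sum_(c <- cs)
    l.1 * c.1 * (letter_val lg l.2 n * Pword lg c.2 n.-1)).
  apply: eq_bigr => n _; rewrite Hf Hg mulr_suml; apply: eq_bigr => l _.
  by rewrite mulr_sumr; apply: eq_bigr => c _; rewrite mulrACA.
rewrite exchange_big; apply: eq_bigr => l _; rewrite exchange_big.
by apply: eq_bigr => c _; rewrite mulr_sumr.
Qed.

Lemma word_span_sum_letter f g : letter_span f -> word_span g ->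
  word_span (fun N => \sum_(1 <= n < N.+1) f n * g n).
Proof.
move=> fP [cs Hg].
have sum_Pword w : word_span (fun N => \sum_(1 <= n < N.+1) f n * Pword lg w n).
  case: w => [|b w]; first exact: word_span_sum_letter_pred fP (word_span_cst 1).
  apply: word_span_eq (word_spanD (word_span_sum_letter_pred fP (word_span_Pword (b :: w)))
    (word_span_sum_letter_pred (letter_spanMr b fP) (word_span_Pword w))) _ => N.
  rewrite -big_split; apply: eq_big_nat => -[|n] // _.
  by rewrite Pword_consS mulrDr mulrA.
apply: word_span_eq (word_span_sum cs (fun c => word_spanZ c.1 (sum_Pword c.2))) _ => N.
under [RHS]eq_bigr do rewrite Hg mulr_sumr.
rewrite [RHS]exchange_big; apply: eq_bigr => c _.
by rewrite mulr_sumr; apply: eq_bigr => n _; rewrite mulrCA.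
Qed.

Lemma Pword_cons_mul a u b v N :
  Pword lg (a :: u) N * Pword lg (b :: v) N =
  \sum_(1 <= n < N.+1) (letter_val lg a n * (Pword lg u n.-1 * Pword lg (b :: v) n.-1)
    + letter_val lg b n * (Pword lg (a :: u) n.-1 * Pword lg v n.-1)
    + letter_val lg (letter_mul a b) n * (Pword lg u n.-1 * Pword lg v n.-1)).
Proof.
elim: N => [|N IHN]; first by rewrite !Pword_cons0 mul0r big_geq.
rewrite !Pword_consS (big_nat_recr N.+1) // -IHN letter_valM /=.
change N.+1.-1 with N; ring.
Qed.

Lemma word_span_Pword_mul u v : word_span (fun N => Pword lg u N * Pword lg v N).
Proof.
elim: u v => [|a u IHu] v.
  by apply: word_span_eq (word_span_Pword v) _ => N; rewrite mul1r.
elim: v => [|b v IHv].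
  by apply: word_span_eq (word_span_Pword (a :: u)) _ => N; rewrite mulr1.
have split3 := word_spanD (word_spanD
  (word_span_sum_letter_pred (letter_span_letter a) (IHu (b :: v)))
  (word_span_sum_letter_pred (letter_span_letter b) IHv))
  (word_span_sum_letter_pred (letter_span_letter (letter_mul a b)) (IHu v)).
by apply: word_span_eq split3 _ => N; rewrite Pword_cons_mul -!big_split.
Qed.

Lemma word_spanM f g : word_span f -> word_span g -> word_span (fun N => f N * g N).
Proof.
move=> [cf Hf] [cg Hg].
apply: word_span_eq (word_span_sum cf (fun x => word_span_sum cg (fun y =>
  word_spanZ (x.1 * y.1) (word_span_Pword_mul x.2 y.2)))) _ => N.
rewrite Hf Hg mulr_suml; apply: eq_bigr => x _; rewrite mulr_sumr.
by apply: eq_bigr => y _; rewrite mulrACA.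
Qed.

Lemma word_span_prod (I : Type) (s : seq I) (F : I -> nat -> C) :
  (forall i, word_span (F i)) -> word_span (fun N => \prod_(i <- s) F i N).
Proof.
move=> FP; elim: s => [|i s IH].
  by apply: word_span_eq (word_span_cst 1) _ => N; rewrite big_nil.
by apply: word_span_eq (word_spanM (FP i) IH) _ => N; rewrite big_cons.
Qed.

Lemma word_spanX f e : word_span f -> word_span (fun N => f N ^+ e).
Proof.
move=> fP; elim: e => [|e IH].
  by apply: word_span_eq (word_span_cst 1) _ => N; rewrite expr0.
by apply: word_span_eq (word_spanM fP IH) _ => N; rewrite exprS.
Qed.

Definition dilate_fac d (fs : seq (C * {poly C})) :=
  [seq (f.1, f.2 \Po ('X * (d%:R^-1)%:P)) | f <- fs].

Lemma prod_cpow_dilate d fs n : (0 < d)%N -> (d %| n)%N ->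
  \prod_(f <- dilate_fac d fs) cpow lg f.2.[n%:R] (- f.1) =
  \prod_(f <- fs) cpow lg f.2.[(n %/ d)%:R] (- f.1).
Proof.
move=> d_gt0 dvd_dn; rewrite big_map; apply: eq_bigr => f _ /=.
have nz_d : d%:R != 0 :> C by rewrite pnatr_eq0 -lt0n.
by rewrite horner_comp !hornerE -{1}(divnK dvd_dn) natrM mulfK.
Qed.

Lemma letter_span_dvd d L : (0 < d)%N ->
  letter_span (fun n => if (d %| n)%N then letter_val lg L (n %/ d) else 0).
Proof.
move=> d_gt0; have nz_d : d%:R != 0 :> C by rewrite pnatr_eq0 -lt0n.
have [zeta zeta_prim] := closed_field_prim_root nz_d.
pose w := d.-root (lsig L); have w_root : w ^+ d = lsig L := rootCK d_gt0 _.
exists [seq (d%:R^-1, Letter (zeta ^+ r * w) (dilate_fac d (lfac L))) | r <- index_iota 0 d].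
move=> n; rewrite big_map.
transitivity (d%:R^-1 * (\sum_(0 <= r < d) (zeta ^+ n) ^+ r) *
    (w ^+ n * \prod_(f <- dilate_fac d (lfac L)) cpow lg f.2.[n%:R] (- f.1))); last first.
  rewrite mulr_sumr mulr_suml; apply: eq_bigr => r _.
  by rewrite /letter_val /= exprMn -!exprM mulnC !mulrA.
rewrite sumr_prim_root_exp //; case: ifP => [dvd_dn|_]; last by rewrite mulr0 mul0r.
rewrite mulVf // mul1r prod_cpow_dilate //.
by rewrite -[in w ^+ n](divnK dvd_dn) mulnC exprM w_root.
Qed.

Lemma word_span_Pword_divn d w : (0 < d)%N -> word_span (fun N => Pword lg w (N %/ d)).
Proof.
move=> d_gt0; elim: w => [|L w IH]; first exact: word_span_cst.
apply: word_span_eq (word_span_sum_letter_pred (letter_span_dvd L d_gt0) IH) _ => N.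
rewrite [RHS]/= (sumr_nat_dvd _ _ d_gt0); apply: eq_bigr => n _.
case: ifP => [dvd_dn|_]; last by rewrite mul0r.
by rewrite divn_pred dvd_dn subn1.
Qed.

End WordSpan.

Theorem theorem6p3 (R : realType) (lg : R[i] -> R[i])
  (hlg : forall w : R[i], w != 0 -> expC (lg w) = w)
  (m : nat) (hm : (0 < m)%N)
  (ps : 'I_m -> nat) (hps : forall j, (0 < ps j)%N)
  (Om : 'I_m -> word R) (es : 'I_m -> nat)
  (z : R[i]) (PQ : seq (R[i] * {poly R[i]}))
  (* PQ = [:: (q_1, P_1); ...; (q_t, P_t)] *)
  (p : nat) (hp : p = \big[lcmn/1%N]_(j < m) ps j)
  (hOm : forall (j : 'I_m) (L : letter R) (f : R[i] * {poly R[i]}),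
      List.In L (Om j) -> List.In f (lfac L) ->
      forall n : nat, (0 < n)%N -> (f.2).[n%:R / (p %/ ps j)%:R] != 0)
  (hPQ : forall f, f \in PQ ->
      forall n : nat, (0 < n)%N -> (f.2).[n%:R / p%:R] != 0) :
  exists cs : seq (R[i] * word R),
    forall k : nat, (0 < k)%N ->
      \sum_(1 <= n < k.+1)
          z ^+ n * \prod_(f <- PQ) cpow lg (f.2).[n%:R] f.1
            * \prod_(j < m) Pword lg (Om j) (ps j * n) ^+ es j
      = \sum_(c <- cs) c.1 * Pword lg c.2 (p * k).
Proof.
(* The identity holds for every branch [lg]: P(n/d) is evaluated literally as
   the value at n of P(X/d). *)
have p_gt0 : (0 < p)%N.
  by rewrite hp; elim/big_ind: _ => // x y; rewrite lcmn_gt0 => -> ->.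
have dvd_p j : (ps j %| p)%N by rewrite hp; apply: biglcmn_sup.
have dilation_gt0 j : (0 < p %/ ps j)%N by rewrite divn_gt0 ?hps // dvdn_leq.
have Pwords_span : word_span lg (fun N =>
    \prod_(j < m) Pword lg (Om j) (N %/ (p %/ ps j)) ^+ es j).
  by apply: word_span_prod => j; apply/word_spanX/word_span_Pword_divn.
have [cs Hcs] := word_span_sum_letter
  (letter_span_dvd lg (Letter z [seq (- f.1, f.2) | f <- PQ]) p_gt0) Pwords_span.
exists cs => k _; rewrite -Hcs -{1}(mulKn k p_gt0) sumr_nat_dvd //.
apply: eq_bigr => n _; case: ifP => [dvd_pn|_]; last by rewrite mul0r.
rewrite /letter_val big_map; under [in RHS]eq_bigr do rewrite opprK.
congr (_ * _); apply: eq_bigr => j _.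
by rewrite divnA // [in RHS]mulnC -muln_divA.
Qed.
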